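(* Let $P$ be the uniform distribution on $[0,1]$, let $\beta=\{\frac14,\frac12\}$, and let $V_n$ ($n\geq2$) be the $n$th conditional quantization error of $P$ with respect to $\beta$, with $V_\infty=\lim_{n\to\infty}V_n$. Then the conditional quantization dimension \[D(P)=\lim_{n\to\infty}\frac{2\log n}{-\log(V_n-V_\infty)}\] exists and $D(P)=1$.
   Context: For a Borel probability measure $P$ on $\mathbb{R}$ and a finite set $\beta\subset\mathbb{R}$ with $\mathrm{card}(\beta)=r$, for $n\geq r$ the $n$th conditional quantization error is $V_n=\inf\{\int\min_{a\in\alpha\cup\beta}(x-a)^2\,dP(x):\alpha\subset\mathbb{R},\ \mathrm{card}(\alpha)\leq n-r\}$. *)

From Stdlib Require Import Reals List.
From Coquelicot Require Import Coquelicot.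
Open Scope R_scope.

(* min_{a in l} (x - a)^2 for a nonempty finite list l (0 for the empty list,
   never used since beta is nonempty). *)
Definition minsq (x : R) (l : list R) : R :=
  match l with
  | nil => 0
  | a :: l' => fold_right (fun b m => Rmin ((x - b) ^ 2) m) ((x - a) ^ 2) l'
  end.

Definition unif_cost (beta alpha : list R) : R :=
  RInt (fun x => minsq x (alpha ++ beta)) 0 1.

Definition cond_qerr (beta : list R) (n : nat) : R :=
  real (Glb_Rbar (fun v => exists alpha : list R,
          (length alpha <= n - length beta)%nat /\ v = unif_cost beta alpha)).

Definition beta0 : list R := (1/4) :: (1/2) :: nil.

From Stdlib Require Import Reals List Lra Lia.
From Coquelicot Require Import Coquelicot.
Open Scope R_scope.

(* V_n is squeezed between 1/(128 n^2) and 1/n^2 for n >= 4.  For the upper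
   bound, take the n - 2 midpoints of the partition of [0,1] into n - 2 equal
   cells.  For the lower bound, the Lorentzian bump
   lorentz d a x = d^4 / (d^2 + (x - a)^2) satisfies
   d^2 <= (x - a)^2 + lorentz d a x and integrates to at most pi d^3 over
   [0,1]; summing it over a codebook of at most n points gives
   V_n >= d^2 - n pi d^3 >= 1/(128 n^2) for d = 1/(8n).  Hence V_inf = 0 and
   -log V_n = 2 log n + O(1). *)

Lemma minsq_cons2 x a b l :
  minsq x (a :: b :: l) = Rmin ((x - b) ^ 2) (minsq x (a :: l)).
Proof. reflexivity. Qed.

Lemma minsq_le x l b : In b l -> minsq x l <= (x - b) ^ 2.
Proof.
  destruct l as [|a l]; [contradiction|].
  induction l as [|c l IH]; intros Hb.
  - destruct Hb as [<-|[]]; apply Rle_refl.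
  - rewrite minsq_cons2.
    destruct Hb as [<-|[<-|Hb]].
    + eapply Rle_trans; [apply Rmin_r|]. apply IH. now left.
    + apply Rmin_l.
    + eapply Rle_trans; [apply Rmin_r|]. apply IH. now right.
Qed.

Lemma minsq_attained x l : l <> nil -> exists b, In b l /\ minsq x l = (x - b) ^ 2.
Proof.
  destruct l as [|a l]; [contradiction|]. intros _.
  induction l as [|c l [b [Hb E]]].
  - exists a. split; [now left | reflexivity].
  - rewrite minsq_cons2. apply Rmin_case.
    + exists c. split; [right; now left | reflexivity].
    + exists b. split; [destruct Hb as [<-|Hb]; [now left | right; now right] | exact E].
Qed.

Lemma continuous_Rmin (f g : R -> R) x :
  continuous f x -> continuous g x -> continuous (fun y => Rmin (f y) (g y)) x.
Proof.
  intros Hf Hg.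
  apply continuous_ext
    with (fun y => mult (minus (plus (f y) (g y)) (Rabs (minus (f y) (g y)))) (/ 2)).
  { intros y. unfold mult, minus, plus, opp; simpl.
    unfold Rmin, Rabs. destruct Rle_dec, Rcase_abs; lra. }
  apply (continuous_mult (K := R_AbsRing)); [|apply continuous_const].
  apply (continuous_minus (V := R_NormedModule)).
  - now apply (continuous_plus (V := R_NormedModule)).
  - apply continuous_Rabs_comp. now apply (continuous_minus (V := R_NormedModule)).
Qed.

Lemma continuous_minsq l x : continuous (fun y => minsq y l) x.
Proof.
  destruct l as [|a l]; [apply continuous_const|].
  induction l as [|b l IH].
  - apply (ex_derive_continuous (V := R_NormedModule)). simpl. auto_derive. exact I.
  - apply continuous_Rmin; [|exact IH].
    apply (ex_derive_continuous (V := R_NormedModule)). auto_derive. exact I.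
Qed.

Lemma ex_RInt_minsq l u v : ex_RInt (fun x => minsq x l) u v.
Proof.
  apply (ex_RInt_continuous (V := R_CompleteNormedModule)). intros; apply continuous_minsq.
Qed.

Definition lorentz (d a x : R) : R := d ^ 4 / (d ^ 2 + (x - a) ^ 2).

Definition lorentz_sum (d : R) (l : list R) (x : R) : R :=
  fold_right (fun a s => lorentz d a x + s) 0 l.

Section Lorentz.

Variable d : R.
Hypothesis d_pos : 0 < d.

Lemma lorentz_denom_pos a x : 0 < d ^ 2 + (x - a) ^ 2.
Proof. pose proof (pow2_ge_0 (x - a)). pose proof (pow_lt d 2 d_pos). lra. Qed.

Lemma lorentz_nonneg a x : 0 <= lorentz d a x.
Proof.
  unfold lorentz. apply Rlt_le, Rdiv_lt_0_compat; [now apply pow_lt | apply lorentz_denom_pos].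
Qed.

Lemma lorentz_sum_nonneg l x : 0 <= lorentz_sum d l x.
Proof. induction l as [|a l IH]; simpl; [lra|]. pose proof (lorentz_nonneg a x). lra. Qed.

Lemma lorentz_le_sum l a x : In a l -> lorentz d a x <= lorentz_sum d l x.
Proof.
  induction l as [|b l IH]; simpl; [contradiction|]. intros [<-|Ha].
  - pose proof (lorentz_sum_nonneg l x). lra.
  - pose proof (lorentz_nonneg b x). specialize (IH Ha). lra.
Qed.

(* d^4/(d^2 + t) >= d^2 - t is the tangent line of a convex function of t. *)
Lemma sqr_add_lorentz_ge a x : d ^ 2 <= (x - a) ^ 2 + lorentz d a x.
Proof.
  unfold lorentz. pose proof (lorentz_denom_pos a x).
  set (t := (x - a) ^ 2) in *. assert (0 <= t) by apply pow2_ge_0.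
  replace (d ^ 4 / (d ^ 2 + t)) with (d ^ 2 - t + t * t / (d ^ 2 + t)) by (field; lra).
  assert (0 <= t * t / (d ^ 2 + t)) by (apply Rdiv_le_0_compat; nra).
  lra.
Qed.

Lemma minsq_ge_sub_lorentz_sum l x : l <> nil -> d ^ 2 - lorentz_sum d l x <= minsq x l.
Proof.
  intros Hl. destruct (minsq_attained x l Hl) as [a [Ha ->]].
  pose proof (lorentz_le_sum l a x Ha). pose proof (sqr_add_lorentz_ge a x). lra.
Qed.

Lemma is_RInt_lorentz a u v :
  is_RInt (lorentz d a) u v (d ^ 3 * atan ((v - a) / d) - d ^ 3 * atan ((u - a) / d)).
Proof.
  apply (is_RInt_derive (fun y => d ^ 3 * atan ((y - a) / d))).
  - intros x _. unfold lorentz. auto_derive; [exact I|].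
    pose proof (lorentz_denom_pos a x).
    assert (0 < 1 + (x + - a) * / d * ((x + - a) * / d * 1)).
    { pose proof (Rle_0_sqr ((x + - a) * / d)). unfold Rsqr in *. lra. }
    field. split; lra.
  - intros x _. apply (ex_derive_continuous (V := R_NormedModule)). unfold lorentz.
    auto_derive. pose proof (lorentz_denom_pos a x). simpl in *. lra.
Qed.

Lemma is_RInt_lorentz_sum_le l u v :
  exists I, is_RInt (lorentz_sum d l) u v I /\ I <= INR (length l) * PI * d ^ 3.
Proof.
  induction l as [|a l [I [HI HIle]]].
  - exists 0. split; [|simpl; lra].
    pose proof (is_RInt_const (V := R_NormedModule) u v 0) as H0.
    rewrite (scal_zero_r (K := R_AbsRing) (V := R_NormedModule)) in H0. exact H0.
  - eexists. split.
    + apply (is_RInt_plus (V := R_NormedModule)); [apply (is_RInt_lorentz a u v) | exact HI].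
    + change (length (a :: l)) with (S (length l)). rewrite S_INR.
      pose proof (atan_bound ((v - a) / d)). pose proof (atan_bound ((u - a) / d)).
      pose proof (pow_lt d 3 d_pos). unfold plus; simpl. nra.
Qed.

Lemma RInt_minsq_ge l :
  l <> nil -> d ^ 2 - INR (length l) * PI * d ^ 3 <= RInt (fun x => minsq x l) 0 1.
Proof.
  intros Hl. destruct (is_RInt_lorentz_sum_le l 0 1) as [I [HI HIle]].
  assert (Hlow : is_RInt (fun x => d ^ 2 - lorentz_sum d l x) 0 1 (d ^ 2 - I)).
  { replace (d ^ 2 - I) with (minus (scal (1 - 0) (d ^ 2)) I)
      by (unfold minus, plus, opp, scal; simpl; unfold mult; simpl; ring).
    apply (is_RInt_minus (V := R_NormedModule) (fun _ => d ^ 2)); [|exact HI].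
    apply (is_RInt_const (V := R_NormedModule)). }
  assert (d ^ 2 - I <= RInt (fun x => minsq x l) 0 1).
  { apply (is_RInt_le _ _ 0 1 _ _ ltac:(lra) Hlow (RInt_correct _ _ _ (ex_RInt_minsq l 0 1))).
    intros x _. now apply minsq_ge_sub_lorentz_sum. }
  lra.
Qed.

End Lorentz.

Lemma RInt_minsq_ge_inv_sq l n :
  l <> nil -> (length l <= n)%nat -> / 128 / INR n ^ 2 <= RInt (fun x => minsq x l) 0 1.
Proof.
  intros Hl Hn.
  assert (HnR : 1 <= INR n).
  { apply (le_INR 1). destruct l; [contradiction | simpl in Hn; lia]. }
  assert (Hlen : INR (length l) <= INR n) by now apply le_INR.
  set (d := / (8 * INR n)).
  assert (Hd : 0 < d) by (unfold d; apply Rinv_0_lt_compat; lra).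
  eapply Rle_trans; [|apply (RInt_minsq_ge d Hd l Hl)].
  pose proof PI_4. pose proof PI_RGT_0.
  pose proof (pos_INR (length l)). pose proof (pow_lt d 3 Hd).
  assert (INR (length l) * PI * d ^ 3 <= INR n * 4 * d ^ 3)
    by (apply Rmult_le_compat_r; [lra | apply Rmult_le_compat; lra]).
  replace (INR n * 4 * d ^ 3) with (d ^ 2 / 2) in * by (unfold d; field; lra).
  replace (/ 128 / INR n ^ 2) with (d ^ 2 / 2) by (unfold d; field; lra).
  lra.
Qed.

Definition midpoint_grid (c : nat) : list R :=
  map (fun k => (INR k + / 2) / INR c) (seq 0 c).

Lemma length_midpoint_grid c : length (midpoint_grid c) = c.
Proof. unfold midpoint_grid. now rewrite length_map, length_seq. Qed.

Lemma exists_unit_cell c y : (1 <= c)%nat -> 0 <= y <= INR c ->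
  exists k, (k < c)%nat /\ INR k <= y <= INR k + 1.
Proof.
  intros Hc Hy. destruct (nfloor_ex y (proj1 Hy)) as [m Hm].
  destruct (Nat.lt_ge_cases m c) as [Hmc|Hmc].
  - exists m. split; [exact Hmc | lra].
  - (* only y = c lands outside the last cell [c - 1, c] *)
    exists (c - 1)%nat. split; [lia|].
    rewrite minus_INR by lia. simpl.
    assert (INR c <= INR m) by (apply le_INR; lia). lra.
Qed.

Lemma midpoint_grid_near c x : (1 <= c)%nat -> 0 <= x <= 1 ->
  exists a, In a (midpoint_grid c) /\ (x - a) ^ 2 <= / (4 * INR c ^ 2).
Proof.
  intros Hc Hx.
  assert (HcR : 1 <= INR c) by (apply (le_INR 1); exact Hc).
  destruct (exists_unit_cell c (x * INR c) Hc) as [k [Hk Hxk]]; [nra|].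
  exists ((INR k + / 2) / INR c). split.
  - apply (in_map (fun k => (INR k + / 2) / INR c)), in_seq. lia.
  - replace (x - (INR k + / 2) / INR c) with ((x * INR c - INR k - / 2) / INR c) by (field; lra).
    replace (/ (4 * INR c ^ 2)) with ((/ 2) ^ 2 / INR c ^ 2) by (field; lra).
    unfold Rdiv. rewrite Rpow_mult_distr, pow_inv.
    apply Rmult_le_compat_r; [apply Rlt_le, Rinv_0_lt_compat, pow_lt; lra|].
    apply pow_maj_Rabs, Rabs_le. lra.
Qed.

Lemma RInt_minsq_le_grid c l : (1 <= c)%nat -> incl (midpoint_grid c) l ->
  RInt (fun x => minsq x l) 0 1 <= / (4 * INR c ^ 2).
Proof.
  intros Hc Hincl.
  eapply Rle_trans.
  - apply (RInt_le _ (fun _ => / (4 * INR c ^ 2)));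
      [lra | apply ex_RInt_minsq | apply ex_RInt_const |].
    intros x Hx. destruct (midpoint_grid_near c x Hc ltac:(lra)) as [a [Ha Hxa]].
    eapply Rle_trans; [apply minsq_le, Hincl, Ha | exact Hxa].
  - rewrite RInt_const. unfold scal; simpl; unfold mult; simpl. lra.
Qed.

Lemma Glb_Rbar_between (E : R -> Prop) (m u : R) :
  is_lb_Rbar E m -> E u -> m <= real (Glb_Rbar E) <= u.
Proof.
  intros Hm Hu. destruct (Glb_Rbar_correct E) as [Hlb Hglb].
  specialize (Hglb m Hm). specialize (Hlb u Hu).
  destruct (Glb_Rbar E); simpl in *; try contradiction; lra.
Qed.

Lemma cond_qerr_beta0_bounds n : (4 <= n)%nat ->
  / 128 / INR n ^ 2 <= cond_qerr beta0 n <= 1 / INR n ^ 2.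
Proof.
  intros Hn.
  assert (HnR : 4 <= INR n) by (apply (le_INR 4) in Hn; simpl in Hn; lra).
  assert (Hgrid : unif_cost beta0 (midpoint_grid (n - 2)) <= 1 / INR n ^ 2).
  { eapply Rle_trans; [apply (RInt_minsq_le_grid (n - 2)); [lia | apply incl_appl, incl_refl]|].
    rewrite minus_INR by lia. unfold Rdiv. rewrite Rmult_1_l.
    (* 2 (n - 2) >= n for n >= 4 *)
    apply Rinv_le_contravar; simpl; nra. }
  enough (/ 128 / INR n ^ 2 <= cond_qerr beta0 n <= unif_cost beta0 (midpoint_grid (n - 2)))
    by lra.
  apply Glb_Rbar_between.
  - intros v [alpha [Halpha ->]]. apply RInt_minsq_ge_inv_sq.
    + now destruct alpha.
    + rewrite length_app. simpl in *. lia.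
  - exists (midpoint_grid (n - 2)). split; [rewrite length_midpoint_grid; simpl; lia | reflexivity].
Qed.

Lemma is_lim_seq_div_INR_sq c : is_lim_seq (fun n => c / INR n ^ 2) 0.
Proof.
  replace (Finite 0) with (Rbar_mult c (Rbar_inv p_infty)) by (simpl; f_equal; ring).
  apply is_lim_seq_scal_l, is_lim_seq_inv; [|discriminate].
  apply (is_lim_seq_ext (fun n => INR n * INR n)); [intros; simpl; ring|].
  apply (is_lim_seq_mult _ _ p_infty p_infty);
    [exact is_lim_seq_INR | exact is_lim_seq_INR | reflexivity].
Qed.

Lemma is_lim_seq_ln_INR : is_lim_seq (fun n => ln (INR n)) p_infty.
Proof.
  apply (is_lim_comp_seq _ _ p_infty p_infty is_lim_ln_p); [|exact is_lim_seq_INR].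
  exists 0%nat. discriminate.
Qed.

Lemma is_lim_seq_ratio_bounded_diff (a w : nat -> R) (C : R) :
  is_lim_seq a p_infty -> eventually (fun n => Rabs (w n - a n) <= C) ->
  is_lim_seq (fun n => a n / w n) 1.
Proof.
  intros Ha Hdiff. apply is_lim_seq_spec. intros eps.
  apply is_lim_seq_spec in Ha. pose proof (cond_pos eps) as Heps.
  generalize (filter_and _ _ Hdiff (Ha (C + C / eps))). apply filter_imp.
  intros n [Hwa Han].
  assert (HC : 0 <= C) by (eapply Rle_trans; [apply Rabs_pos | exact Hwa]).
  assert (HCe : C < eps * (a n - C)).
  { apply (Rmult_lt_reg_r (/ eps)); [now apply Rinv_0_lt_compat|].
    replace (eps * (a n - C) * / eps) with (a n - C) by (field; lra). unfold Rdiv in Han. lra. }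
  assert (Hw : a n - C <= w n) by (apply Rabs_le_between in Hwa; lra).
  assert (Hw0 : 0 < w n) by nra.
  replace (a n / w n - 1) with ((a n - w n) / w n) by (field; lra).
  rewrite Rabs_div, (Rabs_pos_eq (w n)), Rabs_minus_sym by lra.
  apply Rlt_div_l; [exact Hw0|]. nra.
Qed.

Lemma ln_div_INR_sq c n : 0 < c -> (1 <= n)%nat -> ln (c / INR n ^ 2) = ln c - 2 * ln (INR n).
Proof.
  intros Hc Hn. assert (0 < INR n) by (apply lt_0_INR; lia).
  rewrite ln_div, ln_pow by (try apply pow_lt; lra). simpl. ring.
Qed.

Lemma is_lim_seq_squeeze_inv_sq (u : nat -> R) (A B : R) :
  eventually (fun n => A / INR n ^ 2 <= u n <= B / INR n ^ 2) -> is_lim_seq u 0.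
Proof.
  intros Hu. apply (is_lim_seq_le_le_loc _ _ _ _ Hu); apply is_lim_seq_div_INR_sq.
Qed.

Lemma is_lim_seq_log_ratio_inv_sq (u : nat -> R) (A B : R) : 0 < A ->
  eventually (fun n => A / INR n ^ 2 <= u n <= B / INR n ^ 2) ->
  is_lim_seq (fun n => 2 * ln (INR n) / - ln (u n)) 1.
Proof.
  intros HA Hu. apply (is_lim_seq_ratio_bounded_diff _ _ (Rabs (ln A) + Rabs (ln B))).
  - apply (is_lim_seq_ext (fun n => ln (INR n) + ln (INR n))); [intros; ring|].
    apply (is_lim_seq_plus _ _ p_infty p_infty);
      [apply is_lim_seq_ln_INR | apply is_lim_seq_ln_INR | reflexivity].
  - assert (Hn1 : eventually (fun n => (1 <= n)%nat)) by now exists 1%nat.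
    generalize (filter_and _ _ Hu Hn1). apply filter_imp. intros n [[Hlo Hhi] Hn].
    assert (HAn : 0 < A / INR n ^ 2) by (apply Rdiv_lt_0_compat, pow_lt, lt_0_INR; lia || lra).
    assert (HB : 0 < B).
    { apply (Rmult_lt_reg_r (/ INR n ^ 2)); [apply Rinv_0_lt_compat, pow_lt, lt_0_INR; lia|].
      unfold Rdiv in *. lra. }
    assert (Hun : 0 < u n) by lra.
    apply ln_le in Hlo; [|exact HAn]. apply ln_le in Hhi; [|exact Hun].
    rewrite ln_div_INR_sq in Hlo, Hhi by (lia || lra).
    apply Rabs_le_between. pose proof (Rle_abs (- ln A)). pose proof (Rle_abs (ln B)).
    rewrite Rabs_Ropp in *. pose proof (Rabs_pos (ln A)). pose proof (Rabs_pos (ln B)). lra.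
Qed.

Theorem theorem3p11 :
  exists Vinf : R,
    is_lim_seq (fun n => cond_qerr beta0 n) Vinf /\
    is_lim_seq (fun n => 2 * ln (INR n) / (- ln (cond_qerr beta0 n - Vinf))) 1.
Proof.
  assert (Hbounds : eventually (fun n =>
    / 128 / INR n ^ 2 <= cond_qerr beta0 n <= 1 / INR n ^ 2)).
  { exists 4%nat. apply cond_qerr_beta0_bounds. }
  exists 0. split.
  - exact (is_lim_seq_squeeze_inv_sq _ _ _ Hbounds).
  - apply (is_lim_seq_ext (fun n => 2 * ln (INR n) / - ln (cond_qerr beta0 n))).
    { intros n. now rewrite Rminus_0_r. }
    apply (is_lim_seq_log_ratio_inv_sq _ (/ 128) 1); [lra | exact Hbounds].
Qed.
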